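(* Let $(\Omega,\mathcal{F},\mathbb{P})$ be a nonatomic probability space and let $\mathbb{Q}$ be a probability measure absolutely continuous with respect to $\mathbb{P}$. For $1\le r\le\infty$ with $\frac{d\mathbb{Q}}{d\mathbb{P}}\in L^{r'}$ define $\rho_{\mathbb{Q},r}:L^r\to\mathbb{R}\cup\{\infty\}$ by $\rho_{\mathbb{Q},r}(X)=\sup\{\mathbb{E}[-XY]:Y\sim\frac{d\mathbb{Q}}{d\mathbb{P}}\}$. Let $1\le p<\infty$. (i) If $\frac{d\mathbb{Q}}{d\mathbb{P}}\in L^{p'}$, then $\rho_{\mathbb{Q},\infty}$ admits a unique finite-valued, continuous extension to $L^p$, given by $\rho_{\mathbb{Q},p}$. (ii) If $\frac{d\mathbb{Q}}{d\mathbb{P}}\notin L^{p'}$, then $\rho_{\mathbb{Q},\infty}$ admits no finite-valued, continuous extension to $L^p$.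
   Context: $p'$ denotes the conjugate exponent of $p$, i.e. $\frac1p+\frac1{p'}=1$ (with $1'=\infty$, $\infty'=1$). $Y\sim Z$ means equality in law under $\mathbb{P}$. An extension of $\rho_{\mathbb{Q},\infty}$ to $L^p$ is a map on $L^p$ whose restriction to $L^\infty$ equals $\rho_{\mathbb{Q},\infty}$. *)

From HB Require Import structures.
From mathcomp Require Import all_boot all_order all_algebra.
From mathcomp Require Import all_classical all_reals all_analysis.
Set Implicit Arguments. Unset Strict Implicit. Unset Printing Implicit Defensive.
Import Order.TTheory GRing.Theory Num.Theory.
Local Open Scope classical_set_scope.
Local Open Scope ring_scope.

Section Defs.
Context {d : measure_display} {T : measurableType d} {R : realType}.

Definition nonatomic (P : {measure set T -> \bar R}) : Prop :=
  forall A, measurable A -> (0 < P A)%E ->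
    exists B, [/\ measurable B, B `<=` A, (0 < P B)%E & (P B < P A)%E].

Definition abs_cont (Q P : {measure set T -> \bar R}) : Prop :=
  forall A, measurable A -> P A = 0%E -> Q A = 0%E.

Definition is_density (Q P : {measure set T -> \bar R}) (D : T -> R) : Prop :=
  [/\ measurable_fun setT D, (forall x, 0 <= D x) &
      forall A, measurable A -> Q A = (\int[P]_(x in A) (D x)%:E)%E].

Definition conj_exp (p : R) : \bar R :=
  if p == 1 then +oo%E else (p / (p - 1))%:E.

Definition inLp (P : {measure set T -> \bar R}) (p : \bar R) (X : T -> R) : Prop :=
  measurable_fun setT X /\ (Lnorm P p (EFin \o X) < +oo)%E.

Definition law_eq (P : {measure set T -> \bar R}) (Y Z : T -> R) : Prop :=
  forall B : set R, measurable B -> P (Y @^-1` B) = P (Z @^-1` B).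

(* rho_Q(X) = sup { E[-XY] : Y ~ dQ/dP } (the domain L^r is imposed by the
   quantification where rho is used) *)
Definition rhoQ (P : {measure set T -> \bar R}) (D : T -> R) (X : T -> R) : \bar R :=
  ereal_sup [set (\int[P]_x (- (X x * Y x))%:E)%E |
             Y in [set Y | measurable_fun setT Y /\ law_eq P Y D]].

Definition Lp_continuous (P : {measure set T -> \bar R}) (p : \bar R)
    (F : (T -> R) -> R) : Prop :=
  forall X, inLp P p X -> forall e : R, 0 < e -> exists2 del : R, 0 < del &
    forall Z, inLp P p Z -> (Lnorm P p (fun x => (X x - Z x)%:E) < del%:E)%E ->
      `|F X - F Z| < e.

Definition extends_rho_inf (P : {measure set T -> \bar R}) (D : T -> R)
    (F : (T -> R) -> R) : Prop :=
  forall X, inLp P +oo%E X -> (F X)%:E = rhoQ P D X.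

End Defs.

From HB Require Import structures.
From mathcomp Require Import all_boot all_order all_algebra.
From mathcomp Require Import all_classical all_reals all_analysis.
From mathcomp Require Import measurable_realfun ess_sup_inf ring lra.
Import Order.TTheory GRing.Theory Num.Theory.
Local Open Scope classical_set_scope.
Local Open Scope ring_scope.
Set Implicit Arguments. Unset Strict Implicit.

(* Hoelder's inequality and law invariance give |E[X Y]| <= ||X||_p ||dQ/dP||_p'
   for every Y ~ dQ/dP, so rho_Q is Lipschitz on L^p with constant ||dQ/dP||_p'.
   Since bounded functions are dense in L^p (truncation and dominated
   convergence), rho_Q is then the unique continuous extension of its
   restriction to L^oo.  Conversely, if dQ/dP is not in L^p', there are bounded
   W >= 0 of arbitrarily small L^p norm with E[W dQ/dP] >= 1: normalised
   indicators of {dQ/dP > M} when p = 1, normalised powers min(dQ/dP, n)^(p'-1)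
   when p > 1.  As rho_Q(-W) >= E[W dQ/dP] while rho_Q(0) = 0, no extension is
   continuous at 0. *)

Section law_invariance.
Context d (T : measurableType d) (R : realType) (mu : {measure set T -> \bar R}).
Variables (Y Z : T -> R).
Hypotheses (mY : measurable_fun setT Y) (mZ : measurable_fun setT Z).
Hypothesis YZ : law_eq mu Y Z.
Local Open Scope ereal_scope.

Lemma law_eq_ge0_integral (g : R -> R) :
  measurable_fun setT g -> (forall r, (0 <= g r)%R) ->
  \int[mu]_x (g (Y x))%:E = \int[mu]_x (g (Z x))%:E.
Proof.
move=> mg g0; have mEg : measurable_fun [set: R] (EFin \o g) by exact/measurable_EFinP.
have pushY := ge0_integral_pushforward mY mu measurableT mEg (fun r _ => g0 r).
have pushZ := ge0_integral_pushforward mZ mu measurableT mEg (fun r _ => g0 r).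
rewrite !preimage_setT in pushY pushZ.
rewrite -[LHS]pushY -[RHS]pushZ; apply: eq_measure_integral => A mA _.
exact: YZ.
Qed.

Lemma law_eq_Lnorm (q : \bar R) : q != -oo ->
  Lnorm mu q (EFin \o Y) = Lnorm mu q (EFin \o Z).
Proof.
rewrite unlock; case: q => [r| |//] _.
  congr (_ `^ _); apply: (@law_eq_ge0_integral (fun x : R => `|x| `^ r)%R).
    by apply: measurableT_comp (measurable_powR r) _; exact: normr_measurable.
  by move=> x; exact: powR_ge0.
case: ifPn => // _.
have mN : measurable_fun [set: R] (fun x : R => `|x%:E|).
  by apply: measurableT_comp; [exact: abse_measurable | exact: EFin_measurable].
rewrite (ess_supEmu0 _ (measurableT_comp mN mY)).
rewrite (ess_supEmu0 _ (measurableT_comp mN mZ)).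
congr ereal_inf; apply/funext => y.
have mB : measurable ((fun x : R => `|x%:E|) @^-1` `]y, +oo[).
  by rewrite -[X in measurable X]setTI; exact: mN (emeasurable_itv _).
by rewrite /= (YZ mB).
Qed.

End law_invariance.

Section hoelder_conj_exp.
Context d (T : measurableType d) (R : realType) (P : probability T R).
Local Open Scope ereal_scope.

Lemma Lnormy_probability (f : T -> \bar R) :
  Lnorm P +oo f = ess_sup P (abse \o f).
Proof. by rewrite unlock ifT // [X in _ < X](probability_setT P) lte01. Qed.

Lemma hoelder1y (X Y : T -> R) : measurable_fun setT X -> measurable_fun setT Y ->
  Lnorm P +oo (EFin \o Y) < +oo ->
  \int[P]_x (`|X x * Y x|)%:E <= Lnorm P 1 (EFin \o X) * Lnorm P +oo (EFin \o Y).
Proof.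
move=> mX mY; rewrite Lnorm1 Lnormy_probability => Mlty.
have supY0 : 0 <= ess_sup P (abse \o (EFin \o Y)).
  by rewrite -Lnormy_probability Lnorm_ge0.
have Mfin : ess_sup P (abse \o (EFin \o Y)) \is a fin_num by rewrite ge0_fin_numE.
have YM := ess_sup_ge P (abse \o (EFin \o Y)).
rewrite -(fineK Mfin) in YM *; set M := fine _.
have M0 : (0 <= M)%R by rewrite fine_ge0.
have mXE : measurable_fun setT (fun x => (`|X x|)%:E).
  by apply/measurable_EFinP; exact: measurableT_comp.
apply: (@le_trans _ _ (\int[P]_x ((`|X x|)%:E * M%:E))); last first.
  by rewrite ge0_integralZr.
apply: ae_ge0_le_integral => //.
- apply/measurable_EFinP; apply: measurableT_comp => //; exact: measurable_funM.
- by move=> x _; rewrite mule_ge0.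
- exact: emeasurable_funM.
apply: filterS YM => x /= YMx _.
by rewrite normrM EFinM lee_wpmul2l // -abse_EFin.
Qed.

Lemma hoelder_conj_exp (p : R) (X Y : T -> R) : (1 <= p)%R ->
  measurable_fun setT X -> measurable_fun setT Y ->
  Lnorm P (conj_exp p) (EFin \o Y) < +oo ->
  \int[P]_x (`|X x * Y x|)%:E <=
    Lnorm P p%:E (EFin \o X) * Lnorm P (conj_exp p) (EFin \o Y).
Proof.
move=> p1 mX mY; rewrite /conj_exp; case: ifPn => [/eqP-> | pn1 _]; first exact: hoelder1y.
have p_gt1 : (1 < p)%R by rewrite lt_neqAle eq_sym pn1.
have p0 : (0 < p)%R by exact: lt_trans p_gt1.
have q0 : (0 < p / (p - 1))%R by rewrite divr_gt0 // subr_gt0.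
have pq : (p^-1 + (p / (p - 1))^-1 = 1)%R.
  by rewrite invf_div; field; rewrite gt_eqF.
by have := hoelder P mX mY p0 q0 pq; rewrite Lnorm1.
Qed.

End hoelder_conj_exp.

Section Lp_general.
Context d (T : measurableType d) (R : realType) (mu : {measure set T -> \bar R}).
Local Open Scope ereal_scope.

Lemma inLp_cst0 (q : \bar R) : q != 0 -> inLp mu q (fun _ => 0%R).
Proof. by move=> q0; split; [exact: measurable_cst | rewrite Lnorm0 ?ltry]. Qed.

Lemma inLp_fin_num (q : \bar R) X : inLp mu q X -> Lnorm mu q (EFin \o X) \is a fin_num.
Proof. by case=> _ Xlty; rewrite ge0_fin_numE // Lnorm_ge0. Qed.

Lemma inLpB (q : \bar R) (X Z : T -> R) : 1 <= q ->
  inLp mu q X -> inLp mu q Z -> inLp mu q (fun x => X x - Z x)%R.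
Proof.
move=> q1 [mX Xlty] [mZ Zlty].
have mNZ : measurable_fun setT (fun x => - Z x)%R by exact: measurable_funN.
split; first exact: measurable_funB.
apply: le_lt_trans (eminkowski mu mX mNZ q1) _.
have -> : Lnorm mu q (EFin \o (fun x => - Z x)%R) = Lnorm mu q (EFin \o Z).
  by rewrite -[RHS]oppe_Lnorm; apply: eq_Lnorm.
by rewrite lte_add_pinfty.
Qed.

Lemma Lnorm_distC (q : \bar R) (X Z : T -> R) :
  Lnorm mu q (fun x => (X x - Z x)%:E) = Lnorm mu q (fun x => (Z x - X x)%:E).
Proof. by rewrite -oppe_Lnorm; apply: eq_Lnorm => x /=; rewrite opprB. Qed.

Lemma Lp_continuous_lipschitz (q : \bar R) (F : (T -> R) -> R) (C : R) : (0 <= C)%R ->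
  (forall X Z, inLp mu q X -> inLp mu q Z ->
     `|F X - F Z| <= C * fine (Lnorm mu q (fun x => (X x - Z x)%:E)))%R ->
  Lp_continuous mu q F.
Proof.
move=> C0 FC X XLp e e0; have C1 : (0 < C + 1)%R by lra.
exists (e / (C + 1))%R => [|Z ZLp XZ]; first exact: divr_gt0.
set L := Lnorm _ _ _ in XZ; have L0 : 0 <= L by exact: Lnorm_ge0.
have /fineK LE : L \is a fin_num by rewrite ge0_fin_numE // (lt_trans XZ) ?ltry.
rewrite -LE lte_fin in XZ; apply: (le_lt_trans (FC X Z XLp ZLp)).
apply: (@le_lt_trans _ _ (C * (e / (C + 1)))%R); first by rewrite ler_wpM2l // ltW.
by rewrite mulrA ltr_pdivrMr //; nra.
Qed.

Lemma Lnorm_lt_powR (p e : R) (X : T -> R) : (0 < p)%R -> (0 < e)%R ->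
  \int[mu]_x (`|X x| `^ p)%:E < (e `^ p)%:E -> Lnorm mu p%:E (EFin \o X) < e%:E.
Proof.
move=> p0 e0 Ilt; rewrite unlock.
rewrite (_ : \int[mu]_x _ = \int[mu]_x (`|X x| `^ p)%:E) //.
have I0 : 0 <= \int[mu]_x (`|X x| `^ p)%:E.
  by apply: integral_ge0 => x _; rewrite lee_fin powR_ge0.
have Ifin : \int[mu]_x (`|X x| `^ p)%:E \is a fin_num.
  by rewrite ge0_fin_numE // (lt_trans Ilt) ?ltry.
rewrite -(fineK Ifin) lte_fin in Ilt *; rewrite poweR_EFin lte_fin.
rewrite -[ltRHS](@powRr1 _ e) ?(ltW e0) // -(@mulfV _ p) ?gt_eqF // powRrM.
by apply: gt0_ltr_powR; rewrite ?invr_gt0 ?nnegrE ?fine_ge0 ?powR_ge0.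
Qed.

End Lp_general.

Section rhoQ_lipschitz.
Context d (T : measurableType d) (R : realType) (P : probability T R).
Variables (D : T -> R) (p : R).
Hypotheses (mD : measurable_fun setT D) (p1 : (1 <= p)%R).
Hypothesis D_lty : (Lnorm P (conj_exp p) (EFin \o D) < +oo)%E.
Local Open Scope ereal_scope.

Let N := Lnorm P (conj_exp p) (EFin \o D).

Lemma integral_abs_mul_law_le (X Y : T -> R) :
  measurable_fun setT X -> measurable_fun setT Y -> law_eq P Y D ->
  \int[P]_x (`|X x * Y x|)%:E <= Lnorm P p%:E (EFin \o X) * N.
Proof.
move=> mX mY YD; have qNy : conj_exp p != -oo by rewrite /conj_exp; case: ifP.
have := D_lty; rewrite /N -(law_eq_Lnorm mY mD YD qNy).
exact: hoelder_conj_exp.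
Qed.

Lemma integrable_Nmul_law (X Y : T -> R) : inLp P p%:E X ->
  measurable_fun setT Y -> law_eq P Y D ->
  P.-integrable setT (fun x => (- (X x * Y x))%:E).
Proof.
move=> [mX Xlty] mY YD; apply/integrableP; split.
  by apply/measurable_EFinP; apply: measurableT_comp => //; exact: measurable_funM.
under eq_integral do rewrite abse_EFin normrN.
apply: le_lt_trans (integral_abs_mul_law_le mX mY YD) _.
by rewrite lte_mul_pinfty ?Lnorm_ge0 // ge0_fin_numE ?Lnorm_ge0.
Qed.

Lemma rhoQ_ge (X : T -> R) : \int[P]_x (- (X x * D x))%:E <= rhoQ P D X.
Proof. by apply: ereal_sup_ubound; exists D. Qed.

Lemma rhoQ_cst0 : rhoQ P D (fun _ => 0%R) = 0.
Proof.
have int0 (Y : T -> R) : \int[P]_x (- (0 * Y x))%:E = 0.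
  by under eq_integral do rewrite mul0r oppr0; rewrite integral0.
apply/eqP; rewrite eq_le; apply/andP; split; last by rewrite -(int0 D) rhoQ_ge.
by apply: ge_ereal_sup => _ [Y _ <-]; rewrite int0.
Qed.

Lemma rhoQ_le_add (X Z : T -> R) : inLp P p%:E X -> inLp P p%:E Z ->
  rhoQ P D X <= rhoQ P D Z + Lnorm P p%:E (fun x => (Z x - X x)%:E) * N.
Proof.
move=> XLp ZLp; apply: ge_ereal_sup => _ [Y [mY YD] <-].
have iX := integrable_Nmul_law XLp mY YD.
have iZ := integrable_Nmul_law ZLp mY YD.
have ZY_le : \int[P]_x (- (Z x * Y x))%:E <= rhoQ P D Z.
  by apply: ereal_sup_ubound; exists Y.
have mZX : measurable_fun setT (fun x => Z x - X x)%R.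
  by apply: measurable_funB; [case: ZLp | case: XLp].
set a := \int[P]_x (- (X x * Y x))%:E.
rewrite -(subeK a (integrable_fin_num measurableT iZ)) addeC leeD // /a.
rewrite -integralB //; apply: le_trans (lee_abs _) _.
apply: le_trans (le_abse_integral _ _ _) _ => //.
  by apply: emeasurable_funB; [case/integrableP: iX | case/integrableP: iZ].
apply: le_trans (integral_abs_mul_law_le mZX mY YD).
by rewrite le_eqVlt; apply/orP; left; apply/eqP; apply: eq_integral => x _ /=;
  do 2 f_equal; ring.
Qed.

Lemma rhoQ_fin_num (X : T -> R) : inLp P p%:E X -> rhoQ P D X \is a fin_num.
Proof.
move=> XLp; have p0 : p%:E != 0 by rewrite eqe gt_eqF // (lt_le_trans ltr01).
have := rhoQ_le_add XLp (inLp_cst0 P p0); rewrite rhoQ_cst0 add0e.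
rewrite -Lnorm_distC (_ : Lnorm _ _ _ = Lnorm P p%:E (EFin \o X)); last first.
  by apply: eq_Lnorm => x /=; rewrite subr0.
have XDfin : \int[P]_x (- (X x * D x))%:E \is a fin_num.
  exact: integrable_fin_num (integrable_Nmul_law XLp mD (fun _ _ => erefl)).
move=> rho_le; rewrite fin_numE; apply/andP; split.
  rewrite -ltNye (lt_le_trans _ (rhoQ_ge X)) // ltNye.
  by move: XDfin; rewrite fin_numE => /andP[].
rewrite -ltey (le_lt_trans rho_le) // lte_mul_pinfty ?Lnorm_ge0 ?inLp_fin_num //.
Qed.

Lemma fine_rhoQ_lipschitz (X Z : T -> R) : inLp P p%:E X -> inLp P p%:E Z ->
  (`|fine (rhoQ P D X) - fine (rhoQ P D Z)| <=
     fine N * fine (Lnorm P p%:E (fun x => (X x - Z x)%:E)))%R.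
Proof.
move=> XLp ZLp; have XZ := rhoQ_le_add XLp ZLp; have ZX := rhoQ_le_add ZLp XLp.
rewrite -Lnorm_distC in XZ; set L := Lnorm _ _ _ in XZ ZX *.
have Lfin : L \is a fin_num by apply: inLp_fin_num; apply: inLpB; rewrite ?lee_fin.
have Nfin : N \is a fin_num by rewrite ge0_fin_numE ?Lnorm_ge0.
move: XZ ZX; rewrite -(fineK (rhoQ_fin_num XLp)) -(fineK (rhoQ_fin_num ZLp)).
rewrite -(fineK Lfin) -(fineK Nfin) -EFinM -EFinD !lee_fin => XZ ZX.
rewrite ler_norml mulrC; apply/andP; split; lra.
Qed.

Lemma Lp_continuous_rhoQ : Lp_continuous P p%:E (fun X => fine (rhoQ P D X)).
Proof.
apply: (Lp_continuous_lipschitz (C := fine N)); last exact: fine_rhoQ_lipschitz.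
by rewrite fine_ge0 ?Lnorm_ge0.
Qed.

End rhoQ_lipschitz.

Section Linfty_dense_Lp.
Context d (T : measurableType d) (R : realType) (P : probability T R).
Variable p : R.
Hypothesis p1 : (1 <= p)%R.
Local Open Scope ereal_scope.

Lemma inLp_Linfty X : inLp P +oo X -> inLp P p%:E X.
Proof.
move=> [mX Xlty]; have XLy : X \in Lfun P +oo.
  by rewrite inE; apply/andP; split; rewrite inE.
have Pfin : P [set: T] \is a fin_num by rewrite [X in X \is a fin_num]probability_setT.
have p1E : 1 <= p%:E by rewrite lee_fin.
have := Lfun_subset p1E (leey _) Pfin (leey _) XLy.
by rewrite inE => /andP[_]; rewrite inE.
Qed.

Lemma bounded_Linfty (W : T -> R) (c : R) : measurable_fun setT W ->
  (forall x, `|W x| <= c)%R -> inLp P +oo W.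
Proof.
move=> mW Wc; split => //; rewrite Lnormy_probability.
apply: (@le_lt_trans _ _ c%:E); last exact: ltry.
by apply/ess_supP; apply: aeW => x /=; rewrite lee_fin.
Qed.

Definition truncate (n : nat) (X : T -> R) (x : T) : R :=
  (X x * \1_((fun y => `|X y|) @^-1` `]-oo, n%:R]) x)%R.

Lemma measurable_truncate n X : measurable_fun setT X ->
  measurable_fun setT (truncate n X).
Proof.
move=> mX; apply: measurable_funM => //; apply: measurable_indic.
by rewrite -[X in measurable X]setTI; apply: measurableT_comp => //; exact: measurable_itv.
Qed.

Lemma truncate_bound n X x : (`|truncate n X x| <= n%:R)%R.
Proof.
rewrite /truncate indicE; case: (boolP (x \in _)) => [/set_mem|_].
  by rewrite /= in_itv /= mulr1.
by rewrite mulr0 normr0.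
Qed.

Lemma truncate_dist_le n X x : (`|X x - truncate n X x| <= `|X x|)%R.
Proof.
by rewrite /truncate indicE; case: (x \in _); rewrite ?mulr1 ?mulr0 ?subrr ?subr0 ?normr0.
Qed.

Lemma truncate_eventually X x : \forall n \near \oo, truncate n X x = X x.
Proof.
exists (Num.Def.archi_bound `|X x|)%R => // n /= Xn.
rewrite /truncate indicE mem_set ?mulr1 //= in_itv /=.
by rewrite (le_trans (ltW (archi_boundP (normr_ge0 _)))) // ler_nat.
Qed.

Lemma truncate_Linfty n X : measurable_fun setT X -> inLp P +oo (truncate n X).
Proof.
move=> mX; apply: (bounded_Linfty (c := n%:R)); first exact: measurable_truncate.
exact: truncate_bound.
Qed.

Lemma Linfty_dense_Lp X : inLp P p%:E X -> forall e : R, (0 < e)%R ->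
  exists W, inLp P +oo W /\ Lnorm P p%:E (fun x => (X x - W x)%:E) < e%:E.
Proof.
move=> XLp e e0; have [mX _] := XLp; have p0 : (0 < p)%R by exact: lt_le_trans p1.
pose f n x := (`|X x - truncate n X x| `^ p)%:E.
have mf n : measurable_fun setT (f n).
  apply/measurable_EFinP; apply: measurableT_comp (measurable_powR p) _.
  by apply: measurableT_comp => //; apply: measurable_funB => //; exact: measurable_truncate.
have f_cvg0 : {ae P, forall x, setT x -> f ^~ x @ \oo --> (cst 0 : T -> \bar R) x}.
  apply: aeW => x _; apply: cvg_near_cst.
  apply: filterS (truncate_eventually X x) => n tXn.
  by rewrite /f tXn subrr normr0 powR0 ?gt_eqF.
have f_dom : {ae P, forall x n, setT x -> `|f n x| <= (`|X x| `^ p)%:E}.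
  apply: aeW => x n _; rewrite /f gee0_abs ?lee_fin ?powR_ge0 //.
  by apply: ge0_ler_powR; rewrite ?nnegrE ?truncate_dist_le ?(ltW p0).
have Xp_int : P.-integrable setT (fun x => (`|X x| `^ p)%:E).
  apply: (Lfun_integrable p1); rewrite inE; apply/andP; split; rewrite inE //.
  by case: XLp.
have [_ + _] := dominated_convergence measurableT mf (measurable_cst _) f_cvg0 Xp_int f_dom.
move=> /fine_cvgP[/filterI ffin_lt /cvgr_lt lt_ep].
have ep0 : (0 < e `^ p)%R by rewrite powR_gt0.
have [n _ /(_ n (leqnn n))[nfin nlt]] := ffin_lt _ (lt_ep _ ep0).
exists (truncate n X); split; first exact: truncate_Linfty.
move: nlt; rewrite /= -lte_fin fineK //.
have -> : \int[P]_x `|f n x - cst 0 x| = \int[P]_x (`|X x - truncate n X x| `^ p)%:E.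
  by apply: eq_integral => x _; rewrite /f /= subr0 ger0_norm ?powR_ge0.
exact: Lnorm_lt_powR.
Qed.

Lemma Lp_continuous_eq_Linfty (F G : (T -> R) -> R) :
  Lp_continuous P p%:E F -> Lp_continuous P p%:E G ->
  (forall W, inLp P +oo W -> F W = G W) ->
  forall X, inLp P p%:E X -> F X = G X.
Proof.
move=> Fc Gc FG X XLp; apply/eqP; rewrite -subr_eq0 -normr_le0.
apply/ler_addgt0Pr => e e0; rewrite add0r.
have e20 : (0 < e / 2)%R by rewrite divr_gt0.
have [dF dF0 FX] := Fc X XLp _ e20; have [dG dG0 GX] := Gc X XLp _ e20.
have dFG0 : (0 < Num.min dF dG)%R by rewrite lt_min dF0 dG0.
have [W [WLy XW]] := Linfty_dense_Lp XLp dFG0.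
have WLp := inLp_Linfty WLy.
have XWF : Lnorm P p%:E (fun x => (X x - W x)%:E) < dF%:E.
  by apply: lt_le_trans XW _; rewrite lee_fin ge_min lexx.
have XWG : Lnorm P p%:E (fun x => (X x - W x)%:E) < dG%:E.
  by apply: lt_le_trans XW _; rewrite lee_fin ge_min lexx orbT.
have := FX W WLp XWF; have := GX W WLp XWG; rewrite (FG W WLy) => GW FW.
have := ler_distD (G W) (F X) (G X); rewrite (distrC (G W)); lra.
Qed.

End Linfty_dense_Lp.

Section density_not_in_conj_Lp.
Context d (T : measurableType d) (R : realType) (P : probability T R).
Variable D : T -> R.
Hypotheses (mD : measurable_fun setT D) (D0 : forall x, (0 <= D x)%R).
Local Open Scope ereal_scope.

Lemma Lnormy_eqy_measure_gt (M : R) : Lnorm P +oo (EFin \o D) = +oo ->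
  0 < P (D @^-1` `]M, +oo[).
Proof.
have mN : measurable_fun setT (abse \o (EFin \o D)).
  by apply: measurableT_comp => //; exact: measurableT_comp.
have -> : D @^-1` `]M, +oo[ = (abse \o (EFin \o D)) @^-1` `]M%:E, +oo[.
  by apply/seteqP; split => x /=; rewrite !in_itv /= !andbT lte_fin ger0_norm.
rewrite Lnormy_probability => Dy; rewrite lt0e measure_ge0 andbT.
apply/negP => /eqP PM; suff : ess_sup P (abse \o (EFin \o D)) <= M%:E by rewrite Dy.
by apply/ess_supP; exact/(ae_le_measureP P M%:E mN).
Qed.

Lemma pairing_unbounded1 : Lnorm P +oo (EFin \o D) = +oo ->
  forall del : R, (0 < del)%R -> exists W, [/\ inLp P +oo W,
    Lnorm P 1 (EFin \o W) < del%:E & 1 <= \int[P]_x (W x * D x)%:E].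
Proof.
move=> Dy del del0; set M := (del^-1 + 1)%R.
have M0 : (0 < M)%R by rewrite addr_gt0 ?invr_gt0.
set A := D @^-1` `]M, +oo[.
have mA : measurable A.
  by rewrite -[X in measurable X]setTI; apply: mD => //; exact: measurable_itv.
have PA0 : 0 < P A by exact: Lnormy_eqy_measure_gt.
have PAfin : P A \is a fin_num.
  by rewrite ge0_fin_numE ?measure_ge0 // (le_lt_trans (probability_le1 P mA)) ?ltry.
set a := fine (P A); have a0 : (0 < a)%R by rewrite fine_gt0 // PA0 -ge0_fin_numE ?ltW.
set c := ((M * a)^-1)%R; have c0 : (0 < c)%R by rewrite invr_gt0 mulr_gt0.
have intA (k : R) : \int[P]_x (k * \1_A x)%:E = (k * a)%:E.
  under eq_integral do rewrite EFinM.
  rewrite integralZl //; last exact: integrable_indic.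
  by rewrite integral_indic // setIT EFinM /a fineK.
have W0 x : (0 <= c * \1_A x)%R.
  by apply: mulr_ge0; [exact: ltW | rewrite indicE; case: (x \in A)].
exists (fun x => c * \1_A x)%R; split.
- have Wc x : (`|c * \1_A x| <= c)%R.
    by rewrite ger0_norm ?W0 // indicE; case: (_ \in _); rewrite ?mulr1 ?mulr0 // ltW.
  by apply: bounded_Linfty Wc; apply: measurable_funM => //; exact: measurable_indic.
- rewrite Lnorm1; under eq_integral do rewrite /= ger0_norm //.
  rewrite intA lte_fin (_ : c * a = M^-1)%R; last by rewrite /c; field; rewrite !gt_eqF.
  by rewrite invf_plt ?posrE // ltrDl.
- apply: (@le_trans _ _ (\int[P]_x (c * M * \1_A x)%:E)).
    by rewrite intA (_ : c * M * a = 1)%R // /c; field; rewrite !gt_eqF.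
  apply: ge0_le_integral => //.
  + by move=> x _; rewrite lee_fin mulrAC mulr_ge0 ?W0 // ltW.
  + apply/measurable_EFinP; apply: measurable_funM => //; exact: measurable_indic.
  + apply/measurable_EFinP; apply: measurable_funM => //.
    by apply: measurable_funM => //; exact: measurable_indic.
  + move=> x _; rewrite lee_fin mulrAC indicE.
    case: (boolP (x \in A)) => [/set_mem /= xA | _]; rewrite ?mulr0 ?mul0r //.
    by rewrite !mulr1 ler_pM2l // ltW // (itvP xA).
Qed.

Lemma truncated_moment_unbounded (q : R) : (0 < q)%R ->
  Lnorm P q%:E (EFin \o D) = +oo ->
  forall K : R, exists n : nat, K%:E < \int[P]_x ((Num.min (D x) n%:R) `^ q)%:E.
Proof.
move=> q0 Dy K; pose m (n : nat) x := Num.min (D x) n%:R.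
have m0 n x : (0 <= m n x)%R by rewrite /m le_min D0 ler0n.
have mm n : measurable_fun setT (fun x => (m n x `^ q)%:E).
  apply/measurable_EFinP; apply: measurableT_comp (measurable_powR q) _.
  by apply: measurable_minr => //; exact: measurable_cst.
have nd_m x : setT x -> nondecreasing_seq (fun n => (m n x `^ q)%:E).
  move=> _ a b ab; rewrite lee_fin; apply: ge0_ler_powR; rewrite ?nnegrE ?m0 ?(ltW q0) //.
  by rewrite /m; apply: le_min2 => //; rewrite ler_nat.
have m_ge0 n x : setT x -> 0 <= (m n x `^ q)%:E by rewrite lee_fin powR_ge0.
have := @cvg_monotone_convergence _ _ _ P setT measurableT _ mm m_ge0 nd_m.
suff -> : \int[P]_x limn (fun n => (m n x `^ q)%:E) = +oo.
  by move=> /cvgey_gt /(_ K) [n _ /(_ n (leqnn n))]; exists n.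
transitivity (\int[P]_x (D x `^ q)%:E).
  apply: eq_integral => x _; apply: cvg_lim => //; apply: cvg_near_cst.
  exists (Num.Def.archi_bound (D x)) => // n /= Dn; congr ((_ `^ _)%:E).
  by apply/min_idPl; rewrite (le_trans (ltW (archi_boundP (D0 x)))) // ler_nat.
apply/eqP; rewrite eq_le leey /= leNgt; apply/negP => Ilty.
move: Dy; rewrite unlock (_ : \int[P]_x _ = \int[P]_x (D x `^ q)%:E).
  by move=> Dy; have := poweR_lty q^-1 Ilty; rewrite Dy ltxx.
by apply: eq_integral => x _; rewrite /= ger0_norm.
Qed.

Lemma pairing_unbounded (p : R) : (1 < p)%R ->
  Lnorm P (p / (p - 1))%:E (EFin \o D) = +oo ->
  forall del : R, (0 < del)%R -> exists W, [/\ inLp P +oo W,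
    Lnorm P p%:E (EFin \o W) < del%:E & 1 <= \int[P]_x (W x * D x)%:E].
Proof.
move=> p_gt1 Dy del del0; set q := (p / (p - 1))%R in Dy.
have p0 : (0 < p)%R by exact: lt_trans p_gt1.
have p10 : (0 < p - 1)%R by rewrite subr_gt0.
have q0 : (0 < q)%R by exact: divr_gt0.
have q1p : ((q - 1) * p = q)%R by rewrite /q; field; rewrite gt_eqF.
have qp1 : (q * (p - 1) = p)%R by rewrite /q; field; rewrite gt_eqF.
(* ||W||_p = S^(-1/q) for the W below, hence the threshold del^(-q) for S *)
have [n Kn] := truncated_moment_unbounded q0 Dy (del `^ (- q)).
pose m x := Num.min (D x) n%:R; set S := \int[P]_x (m x `^ q)%:E.
have {}Kn : (del `^ (- q))%:E < S := Kn.
have m0 x : (0 <= m x)%R by rewrite /m le_min D0 ler0n.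
have mm : measurable_fun setT m by apply: measurable_minr => //; exact: measurable_cst.
have mmq : measurable_fun setT (fun x => (m x `^ q)%:E).
  by apply/measurable_EFinP; exact: measurableT_comp (measurable_powR q) mm.
have Sfin : S \is a fin_num.
  rewrite ge0_fin_numE; last by apply: integral_ge0 => x _; rewrite lee_fin powR_ge0.
  apply: (@le_lt_trans _ _ (\int[P]_x (cst (n%:R `^ q)%:E x))).
    apply: ge0_le_integral => //; first by move=> x _; rewrite lee_fin powR_ge0.
    move=> x _; rewrite lee_fin; apply: ge0_ler_powR; rewrite ?nnegrE ?m0 ?(ltW q0) //.
    by rewrite /m ge_min lexx orbT.
  by rewrite integral_cst // [X in _ * X]probability_setT mule1 ltry.
set s := fine S; have SE : S = s%:E by rewrite fineK.
have sK : (del `^ (- q) < s)%R by rewrite -lte_fin -SE.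
have s0 : (0 < s)%R by exact: le_lt_trans (powR_ge0 _ _) sK.
have si0 : (0 < s^-1)%R by rewrite invr_gt0.
pose W x := (s^-1 * m x `^ (q - 1))%R.
have W0 x : (0 <= W x)%R by rewrite mulr_ge0 ?powR_ge0 ?ltW.
have mW : measurable_fun setT W.
  by apply: measurable_funM => //; exact: measurableT_comp (measurable_powR _) mm.
have intS (k : R) : (0 <= k)%R -> \int[P]_x (k * m x `^ q)%:E = k%:E * s%:E.
  move=> k0; under eq_integral do rewrite EFinM.
  rewrite ge0_integralZl_EFin //; first by congr (_ * _); exact: SE.
  by move=> x _; rewrite lee_fin powR_ge0.
exists W; split.
- apply: (@bounded_Linfty _ _ _ _ _ (s^-1 * n%:R `^ (q - 1))%R) => // x.
  rewrite ger0_norm // ler_pM2l //; apply: ge0_ler_powR; rewrite ?nnegrE ?m0 //.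
    by rewrite subr_ge0 /q ler_pdivlMr // mul1r lerBlDr lerDl.
  by rewrite /m ge_min lexx orbT.
- apply: Lnorm_lt_powR => //.
  have -> : \int[P]_x (`|W x| `^ p)%:E = \int[P]_x (s^-1 `^ p * m x `^ q)%:E.
    apply: eq_integral => x _; rewrite ger0_norm // /W.
    by rewrite powRM ?powR_ge0 ?(ltW si0) // -[in RHS]q1p powRrM.
  rewrite intS ?powR_ge0 // -EFinM lte_fin.
  have -> : (s^-1 `^ p = s `^ (- p))%R.
    by rewrite -powR_inv1 ?(ltW s0) // -powRrM mulN1r.
  have -> : (s `^ (- p) * s = (s `^ (p - 1))^-1)%R.
    rewrite -powRN opprB -{2}(powRr1 (ltW s0)) -powRD; first by rewrite addrC.
    by rewrite (gt_eqF s0) implybT.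
  have dK : ((del `^ p)^-1 = (del `^ (- q)) `^ (p - 1))%R.
    by rewrite -powRrM mulNr qp1 powRN.
  rewrite invf_plt ?posrE ?powR_gt0 // dK.
  by apply: gt0_ltr_powR; rewrite ?nnegrE ?powR_ge0 ?(ltW s0).
- apply: (@le_trans _ _ (\int[P]_x (s^-1 * m x `^ q)%:E)).
    by rewrite intS ?(ltW si0) // -EFinM mulVf ?gt_eqF.
  apply: ge0_le_integral => //.
  + by move=> x _; rewrite lee_fin mulr_ge0 ?powR_ge0 ?(ltW si0).
  + apply/measurable_EFinP; apply: measurable_funM => //.
    exact: measurableT_comp (measurable_powR _) mm.
  + by apply/measurable_EFinP; exact: measurable_funM.
  move=> x _; rewrite lee_fin /W -mulrA ler_pM2l // -{1}(@subrK _ 1%R q) powRD.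
    by rewrite powRr1 ?m0 // ler_wpM2l ?powR_ge0 // /m ge_min lexx.
  by rewrite subrK gt_eqF ?implybT.
Qed.

Lemma pairing_unbounded_conj_exp (p : R) : (1 <= p)%R -> ~ inLp P (conj_exp p) D ->
  forall del : R, (0 < del)%R -> exists W, [/\ inLp P +oo W,
    Lnorm P p%:E (EFin \o W) < del%:E & 1 <= \int[P]_x (W x * D x)%:E].
Proof.
move=> p1 nD; have Dy : Lnorm P (conj_exp p) (EFin \o D) = +oo.
  by apply/eqP; rewrite eq_le leey /= leNgt; apply/negP => Dlty; apply: nD.
move: Dy; rewrite /conj_exp; case: ifPn => [/eqP-> | pn1].
  exact: pairing_unbounded1.
by apply: pairing_unbounded; rewrite lt_neqAle eq_sym pn1.
Qed.

Lemma no_continuous_extension (p : R) : (1 <= p)%R -> ~ inLp P (conj_exp p) D ->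
  ~ exists F, extends_rho_inf P D F /\ Lp_continuous P p%:E F.
Proof.
move=> p1 nD [F [FE Fc]].
have p0 : p%:E != 0 by rewrite eqe gt_eqF // (lt_le_trans ltr01).
have [del del0 F0_cont] := Fc _ (inLp_cst0 P p0) _ ltr01.
have [W [WLy Wdel W1]] := pairing_unbounded_conj_exp p1 nD del0.
have cst0Ly : inLp P +oo (fun _ => 0%R) by apply: inLp_cst0.
pose Z x := (0 - W x)%R.
have ZLy : inLp P +oo Z by apply: inLpB; [exact: leey | exact: cst0Ly | exact: WLy].
have F0 : F (fun _ => 0%R) = 0%R by apply/EFin_inj; rewrite FE // rhoQ_cst0.
have ZD : \int[P]_x (W x * D x)%:E = \int[P]_x (- (Z x * D x))%:E.
  by apply: eq_integral => x _; rewrite /Z sub0r mulNr opprK.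
have FZ : (1 <= F Z)%R by rewrite -lee_fin FE // (le_trans W1) // ZD rhoQ_ge.
have := F0_cont Z (inLp_Linfty p1 ZLy).
rewrite (_ : Lnorm _ _ _ = Lnorm P p%:E (EFin \o W)) => [/(_ Wdel)|]; last first.
  by apply: eq_Lnorm => x /=; rewrite /Z !sub0r opprK.
by rewrite F0 sub0r normrN ltr_norml => /andP[_]; rewrite ltNge FZ.
Qed.

End density_not_in_conj_Lp.

Theorem proposition7p3 (d : measure_display) (T : measurableType d) (R : realType)
  (P : probability T R) (Q : probability T R) (D : T -> R) (p : R) :
  nonatomic P -> abs_cont Q P -> is_density Q P D -> 1 <= p ->
  (inLp P (conj_exp p) D ->
     exists F : (T -> R) -> R,
       [/\ extends_rho_inf P D F, Lp_continuous P p%:E F,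
           (forall X, inLp P p%:E X -> rhoQ P D X = (F X)%:E) &
           (forall G : (T -> R) -> R,
              extends_rho_inf P D G -> Lp_continuous P p%:E G ->
              forall X, inLp P p%:E X -> G X = F X)]) /\
  (~ inLp P (conj_exp p) D ->
     ~ exists F : (T -> R) -> R,
         extends_rho_inf P D F /\ Lp_continuous P p%:E F).
Proof.
move=> _ _ [mD D0 _] p1; split; last exact: no_continuous_extension.
move=> [_ D_lty]; pose F X := fine (rhoQ P D X).
have rhoE X : inLp P p%:E X -> rhoQ P D X = (F X)%:E.
  by move=> XLp; rewrite fineK // (rhoQ_fin_num mD p1 D_lty XLp).
have Fc : Lp_continuous P p%:E F := Lp_continuous_rhoQ mD p1 D_lty.
exists F; split => // [X /(inLp_Linfty p1) /rhoE -> // | G GE Gc].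
apply: (Lp_continuous_eq_Linfty p1 Gc Fc) => W WLy.
by apply/EFin_inj; rewrite GE // rhoE //; exact: inLp_Linfty.
Qed.
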